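(* Let $G$ be a simple directed graph on $[n]$ and let $\sigma\subseteq[n]$. (1) If $\sigma$ is not a clique of $G$, then $\sigma$ is not a stable motif of $W(G,\varepsilon,\delta)$ for any legal $\varepsilon,\delta$ such that $$\delta > \frac{\varepsilon}{1-\varepsilon}\,(|\sigma|^2-|\sigma|-1).$$ (2) If the induced subgraph $G|_\sigma$ has maximum in-degree $d^{in}_{\max}=d<|\sigma|-1$, then $\sigma$ is not a stable motif of $W(G,\varepsilon,\delta)$ for any legal $\varepsilon,\delta$ such that $$\delta>\frac{\varepsilon d}{|\sigma|-1-d}.$$
   Context: Let $G$ be a simple directed graph (no self-loops, no multiple edges) on vertex set $[n]=\{1,\dots,n\}$; $j\to i$ denotes an edge from $j$ to $i$. Parameters $\varepsilon,\delta$ are in the legal range if $\delta>0$ and $0<\varepsilon<\frac{\delta}{\delta+1}$. The combinatorial threshold-linear network (CTLN) $W=W(G,\varepsilon,\delta)$ is the $n\times n$ matrix with $W_{ii}=0$, $W_{ij}=-1+\varepsilon$ if $j\to i$ in $G$, and $W_{ij}=-1-\delta$ if $i\ne j$ and $j\not\to i$; its dynamics are $\dot x_i=-x_i+[\sum_j W_{ij}x_j+\theta]_+$ with $\theta>0$. CTLNs are assumed nondegenerate: $\det(I-W_\sigma)\neq0$ for all $\sigma$ and all Cramer's-rule determinants of $(I-W_\sigma)x=\theta 1_\sigma$ are nonzero. For $\sigma\subseteq[n]$, $W_\sigma$ is the principal submatrix indexed by $\sigma$ (the CTLN of the induced subgraph $G|_\sigma$). $\sigma$ is a permitted motif if $W_\sigma$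 has a fixed point with full support $\sigma$, i.e. $\theta(I-W_\sigma)^{-1}1_\sigma$ has all entries positive; $\sigma$ is a stable motif if it is permitted and all eigenvalues of $I-W_\sigma$ have positive real part. A clique is a set of nodes that are pairwise bidirectionally connected (singletons are cliques). In-degrees in $G|_\sigma$ count edges from nodes of $\sigma$. *)

From HB Require Import structures.
From mathcomp Require Import all_boot all_order all_algebra.
From mathcomp Require Import complex.
Set Implicit Arguments. Unset Strict Implicit. Unset Printing Implicit Defensive.
Import Order.TTheory GRing.Theory Num.Theory.
Local Open Scope ring_scope.

(* A simple directed graph on 'I_n is an irreflexive relation e;
   [e j i] means the edge j -> i. *)
Definition simple_digraph n (e : rel 'I_n) : Prop := irreflexive e.

Section CTLN.
Variable R : rcfType.

Definition ctln n (e : rel 'I_n) (eps delta : R) : 'M[R]_n :=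
  \matrix_(i, j) (if i == j then 0
                  else if e j i then -1 + eps else -1 - delta).

Definition legal (eps delta : R) : Prop :=
  0 < delta /\ 0 < eps /\ eps < delta / (delta + 1).

Definition subm n (W : 'M[R]_n) (s : {set 'I_n}) : 'M[R]_#|s| :=
  \matrix_(i, j) W (enum_val i) (enum_val j).

Definition ImW n (W : 'M[R]_n) (s : {set 'I_n}) : 'M[R]_#|s| :=
  1%:M - subm W s.

(* matrix of Cramer's rule for (I - W_s) x = theta 1_s, column k replaced *)
Definition cramer_mx n (W : 'M[R]_n) (s : {set 'I_n}) (theta : R)
  (k : 'I_#|s|) : 'M[R]_#|s| :=
  \matrix_(i, j) (if j == k then theta else ImW W s i j).

Arguments cramer_mx {n} W s theta k.

Definition ctln_nondeg n (W : 'M[R]_n) (theta : R) : Prop :=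
  forall s : {set 'I_n}, \det (ImW W s) != 0 /\
    forall k, \det (cramer_mx W s theta k) != 0.

Definition permitted n (W : 'M[R]_n) (s : {set 'I_n}) (theta : R) : Prop :=
  forall i : 'I_#|s|,
    0 < (theta *: (invmx (ImW W s) *m (const_mx 1 : 'cV[R]_#|s|))) i ord0.

Definition eigenC m (A : 'M[R]_m) (lam : R[i]) : bool :=
  root (char_poly (map_mx (fun x : R => x%:C%C) A)) lam.

Definition stable_motif n (W : 'M[R]_n) (s : {set 'I_n}) (theta : R) : Prop :=
  permitted W s theta /\
  forall lam : R[i], eigenC (ImW W s) lam -> 0 < Re lam.
End CTLN.

Definition clique n (e : rel 'I_n) (s : {set 'I_n}) : Prop :=
  forall i j, i \in s -> j \in s -> i != j -> e i j /\ e j i.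

Definition indeg n (e : rel 'I_n) (s : {set 'I_n}) (i : 'I_n) : nat :=
  #|[set j in s | e j i]|.

Definition max_indeg n (e : rel 'I_n) (s : {set 'I_n}) : nat :=
  \max_(i in s) indeg e s i.

From HB Require Import structures.
From mathcomp Require Import all_boot all_order all_algebra.
From mathcomp Require Import complex polyrcf.
From mathcomp.algebra_tactics Require Import ring lra.
From mathcomp Require Import zify.
Import Order.TTheory GRing.Theory Num.Theory.
Set Implicit Arguments.
Unset Strict Implicit.
Unset Printing Implicit Defensive.
Local Open Scope ring_scope.

(* Let A = I - W_sigma and k = |sigma|; A has unit diagonal, so tr A = k, and
   stability means that all (complex) eigenvalues l_i of A have Re l_i > 0.
   (1) Then tr(A)^2 - tr(A^2) >= (sum Re l_i)^2 - sum (Re l_i)^2 > 0, while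
   tr(A)^2 - tr(A^2) = sum_(i,j) (1 - A_ij A_ji) <= 2 eps k (k - 1), with a
   deficit of at least 2 (eps + delta (1 - eps)) coming from a pair of nodes
   that is not bidirectionally connected; this makes the sum negative under
   the bound on delta.
   (2) Every real eigenvalue of A is at most sum Re l_i = k.  But A is
   entrywise nonnegative with row sums at least
   k + delta (k - 1 - d) - eps d > k, and such a matrix has a real eigenvalue
   at least its smallest row sum. *)

Lemma sumr_indicator (R : nzSemiRingType) (I : finType) (P : pred I) :
  \sum_i ((P i)%:R : R) = #|P|%:R.
Proof.
rewrite -sum1_card natr_sum [RHS]big_mkcond.
by apply: eq_bigr => i _; rewrite unfold_in; case: (P i).
Qed.

Lemma sumr_neq_ord (R : nzRingType) k :
  \sum_(i < k) \sum_(j < k) ((i != j)%:R : R) = k%:R * (k%:R - 1).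
Proof.
have neq_count (i : 'I_k) : \sum_j ((i != j)%:R : R) = k%:R - 1.
  rewrite (bigD1 i) //= eqxx add0r (eq_bigr (fun=> 1)) => [|j]; last first.
    by rewrite eq_sym => ->.
  by rewrite sumr_const cardC1 card_ord -[in RHS](ltn_predK (ltn_ord i)) -natr1 addrK.
by rewrite (eq_bigr _ (fun i _ => neq_count i)) sumr_const card_ord mulr_natl.
Qed.

Lemma trace_sqr_unit_diag (R : comNzRingType) k (A : 'M[R]_k) :
  (forall i, A i i = 1) ->
  \tr A ^+ 2 - \tr (A *m A) = \sum_i \sum_j (1 - A i j * A j i).
Proof.
move=> A1; have -> : \tr A = k%:R.
  by rewrite /mxtrace (eq_bigr _ (fun i _ => A1 i)) sumr_const card_ord.
rewrite /mxtrace; under [RHS]eq_bigr do rewrite sumrB sumr_const card_ord.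
rewrite sumrB sumr_const card_ord -[k%:R *+ k]mulr_natr -expr2.
by congr (_ - _); apply: eq_bigr => i _; rewrite mxE.
Qed.

Lemma ler_sum_pair (R : numDomainType) (I : finType) (F : I -> R) i j :
  i != j -> (forall l, 0 <= F l) -> F i + F j <= \sum_l F l.
Proof.
move=> ij F_ge0; rewrite (bigD1 i) //= (bigD1 j) 1?eq_sym //= addrA lerDl.
exact: sumr_ge0.
Qed.

Lemma sumr_sqr_lt (R : realDomainType) (I : finType) (a : I -> R) :
  (1 < #|I|)%N -> (forall i, 0 < a i) -> \sum_i a i ^+ 2 < (\sum_i a i) ^+ 2.
Proof.
move=> /card_gt1P[x [y [_ _ xy]]] a_gt0.
have a_ge0 l : 0 <= a l by apply/ltW.
rewrite [X in _ < X]expr2 mulr_sumr; apply: ltr_sum => [|i _].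
  by apply/hasP; exists x; rewrite ?mem_index_enum.
have [j ji] : exists j, j != i.
  case: (eqVneq x i) => [<-|xi]; first by exists y; rewrite eq_sym.
  by exists x.
rewrite expr2 mulrC ltr_pM2r //.
by apply: lt_le_trans (ler_sum_pair ji a_ge0); rewrite ltrDr.
Qed.

Lemma char_poly_conj (F : fieldType) n (P A : 'M[F]_n) : P \in unitmx ->
  char_poly (P *m A *m invmx P) = char_poly A.
Proof.
move=> uP; rewrite /char_poly.
have -> : char_poly_mx (P *m A *m invmx P) =
    map_mx polyC P *m char_poly_mx A *m map_mx polyC (invmx P).
  rewrite /char_poly_mx mulmxBr mulmxBl -!map_mxM scalar_mxC -mulmxA.
  by congr (_ - _); rewrite -mulmxA -map_mxM mulmxV // map_mx1 mulmx1.
rewrite !det_mulmx mulrC mulrA -det_mulmx -map_mxM mulVmx //.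
by rewrite map_mx1 det1 mul1r.
Qed.

Lemma trig_eigenvalues (C : numClosedFieldType) k (A : 'M[C]_k) :
  exists t : 'I_k -> C,
    [/\ char_poly A = \prod_i ('X - (t i)%:P), \tr A = \sum_i t i
      & \tr (A *m A) = \sum_i t i ^+ 2].
Proof.
case: k A => [|k] A.
  by exists (fun=> 0); rewrite /char_poly /mxtrace det_mx00 !big_ord0.
have [P /unitarymx_unit uP] := Schur A (ltn0Sn k).
rewrite /similar_to /= conjumx // => /is_trig_mxP Ttrig.
set T := P *m A *m invmx P in Ttrig.
have trT M : \tr (P *m M *m invmx P) = \tr M.
  by rewrite mxtrace_mulC mulmxA mulVmx // mul1mx.
exists (fun i => T i i); split.
- by rewrite -(char_poly_conj A uP) char_poly_trig //; apply/is_trig_mxP.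
- by rewrite -(trT A).
- have -> : \tr (A *m A) = \tr (T *m T).
    by rewrite -(trT (A *m A)) /T !mulmxA mulmxKV.
  apply: eq_bigr => i _; rewrite mxE (bigD1 i) //= big1 ?addr0 // => l li.
  by case: (ltngtP i l) => [il|li'|/val_inj eil];
    [rewrite Ttrig ?mul0r | rewrite (Ttrig l i) ?mulr0 | rewrite eil eqxx in li].
Qed.

(* The spectral half of [stable_motif]; there [Re lam] is the real part as an
   element of [R[i]]. *)
Definition positive_stable (R : rcfType) k (A : 'M[R]_k) : Prop :=
  forall lam : R[i], eigenC A lam -> 0 < Re lam.

Section PositiveStable.
Variables (R : rcfType) (k : nat) (A : 'M[R]_k).
Hypothesis A_stable : positive_stable A.

Lemma positive_stable_eigenvalues : exists t : 'I_k -> R[i],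
  [/\ char_poly (map_mx (real_complex R) A) = \prod_i ('X - (t i)%:P),
      forall i, 0 < complex.Re (t i), \tr A = \sum_i complex.Re (t i)
    & \tr (A *m A) = \sum_i complex.Re (t i ^+ 2)].
Proof.
have [t [ch tr1 tr2]] := trig_eigenvalues (map_mx (real_complex R) A).
exists t; split=> // [i||].
- rewrite -ltcR complexRe; apply: A_stable.
  by rewrite /eigenC ch (bigD1 i) //= rootM root_XsubC eqxx.
- by rewrite -raddf_sum -tr1 trace_map_mx.
- by rewrite -raddf_sum -tr2 -map_mxM trace_map_mx.
Qed.

Lemma positive_stable_real_root_le_trace x :
  root (char_poly A) x -> x <= \tr A.
Proof.
have [t [ch t_gt0 trE _]] := positive_stable_eigenvalues.
move=> /(rmorph_root (real_complex R)); rewrite map_char_poly ch.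
rewrite /root horner_prod prodf_seq_eq0 => /hasP[i _].
rewrite !hornerE subr_eq0 => /eqP xE.
rewrite trE (bigD1 i) //= -xE lerDl.
by apply: sumr_ge0 => j _; apply/ltW.
Qed.

Lemma positive_stable_trace_sqr_lt : (1 < k)%N -> \tr (A *m A) < \tr A ^+ 2.
Proof.
move=> k_gt1; have [t [_ t_gt0 trE tr2E]] := positive_stable_eigenvalues.
rewrite trE tr2E; apply: le_lt_trans (sumr_sqr_lt _ t_gt0); last by rewrite card_ord.
apply: ler_sum => i _; case: (t i) => a b; rewrite /= !expr2 /=.
by rewrite gerDl oppr_le0 -expr2 sqr_ge0.
Qed.

End PositiveStable.

Lemma horner_char_poly_mx (R : comNzRingType) k (B : 'M[R]_k) t :
  map_mx (horner_eval t) (char_poly_mx B) = t%:M - B.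
Proof.
apply/matrixP => i j; rewrite !mxE /horner_eval.
by case: (i == j); rewrite hornerD hornerN hornerC ?hornerMn ?hornerX.
Qed.

Lemma nonneg_at_last_root (R : rcfType) (I : finType) (w : I -> {poly R}) a b j :
  a <= b -> (w j).[a] < 0 -> (forall l, 0 < (w l).[b]) ->
  exists2 y, y \in `[a, b] & (forall l, 0 <= (w l).[y]) /\ exists l, root (w l) y.
Proof.
move=> ab wj_lt0 w_gt0; pose P := \prod_l w l.
have P_b : 0 < P.[b] by rewrite horner_prod; apply: prodr_gt0 => l _.
have rootP l x : root (w l) x -> root P x.
  by rewrite /root horner_prod (bigD1 l) //= => /eqP->; rewrite mul0r.
have sign_change l y : (w l).[y] < 0 -> (w l).[y] * (w l).[b] < 0.
  by move=> wly; rewrite pmulr_llt0.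
have [x x_in wx] := poly_ivtoo ab (sign_change j a wj_lt0).
case: (prev_rootP P a b) => [P0 | y _ Py y_in y_last | _ _ _ P_noroot].
- by rewrite P0 horner0 ltxx in P_b.
- have yb : y <= b by rewrite (itvP y_in).
  exists y; first by rewrite in_itv /= !(itvP y_in).
  split=> [l|]; last first.
    by move/eqP: Py; rewrite horner_prod prodf_seq_eq0 => /hasP[l]; exists l.
  rewrite leNgt; apply/negP => /(sign_change l y) /(poly_ivtoo yb).
  by case=> z z_in /rootP wz; have := y_last z z_in; rewrite wz.
- by have := P_noroot x x_in; rewrite (rootP j x wx).
Qed.

Section NonnegativeMatrix.
Variables (R : rcfType) (k : nat) (B : 'M[R]_k).

Definition adj_rowsum (j : 'I_k) : {poly R} := \sum_l \adj (char_poly_mx B) j l.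

Lemma horner_adj_rowsum t j :
  t * (adj_rowsum j).[t] - \sum_l B j l * (adj_rowsum l).[t] = (char_poly B).[t].
Proof.
have adjE l m : (\adj (char_poly_mx B) l m).[t] = \adj (t%:M - B) l m.
  by rewrite -horner_char_poly_mx -map_mx_adj [RHS]mxE.
have -> : (char_poly B).[t] = \det (t%:M - B).
  by rewrite -horner_char_poly_mx det_map_mx.
have := congr1 (fun M => (M *m (const_mx 1 : 'cV_k)) j ord0) (mul_mx_adj (t%:M - B)).
rewrite /= -mulmxA mulmxBl !mul_scalar_mx !mxE mulr1 => <-.
rewrite /adj_rowsum horner_sum; congr (_ * _ - _).
  by apply: eq_bigr => l _; rewrite adjE !mxE mulr1.
apply: eq_bigr => l _; rewrite !mxE horner_sum; congr (_ * _).
by apply: eq_bigr => m _; rewrite adjE !mxE mulr1.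
Qed.

Hypothesis B_ge0 : forall i j, 0 <= B i j.

Lemma horner_char_poly_le_min_adj_rowsum t m :
  (forall l, (adj_rowsum m).[t] <= (adj_rowsum l).[t]) ->
  (char_poly B).[t] <= (t - \sum_l B m l) * (adj_rowsum m).[t].
Proof.
move=> m_min; rewrite -(horner_adj_rowsum t m) mulrBl mulr_suml lerD2l lerN2.
by apply: ler_sum => l _; apply: ler_wpM2l.
Qed.

(* The entries of w(t) = adj(tI - B) 1 solve (tI - B) w(t) = (char_poly B).[t] 1,
   whose right-hand side is positive for t >= r if there is no root there.  At
   a minimal entry this forces w(r) to have a negative entry and w(T) > 0 for T
   the sum of all entries of B, and it excludes points where w >= 0 has a zero
   entry; but the last zero of an entry of w before T is such a point. *)
Lemma nonneg_mx_char_poly_root_ge (r : R) : (0 < k)%N ->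
  (forall i, r <= \sum_j B i j) -> ~ {in `[r, +oo[, forall x, ~~ root (char_poly B) x}.
Proof.
move=> k_gt0 r_le noroot; set w := adj_rowsum.
have min_gt0 t m : r <= t -> (forall l, (w m).[t] <= (w l).[t]) ->
    0 < (t - \sum_l B m l) * (w m).[t].
  move=> rt /horner_char_poly_le_min_adj_rowsum; apply: lt_le_trans.
  have := sgp_pinftyP noroot; rewrite /sgp_pinfty (monicP (char_poly_monic B)).
  by rewrite sgr1 -sgr_cp0 => ->; rewrite // in_itv /= rt.
have argmin t : exists m, forall l, (w m).[t] <= (w l).[t].
  case: (@arg_minP _ _ _ (Ordinal k_gt0) xpredT (fun l => (w l).[t]) isT).
  by move=> m _ m_min; exists m => l; apply: m_min.
pose T := \sum_i \sum_j B i j.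
have rowsum_le_T i : \sum_j B i j <= T.
  by rewrite [T](bigD1 i) //= lerDl; do 2!apply: sumr_ge0 => ? _.
have rT : r <= T := le_trans (r_le (Ordinal k_gt0)) (rowsum_le_T _).
have [j wj_lt0] : exists j, (w j).[r] < 0.
  have [m m_min] := argmin r; exists m.
  have := min_gt0 r m (lexx r) m_min; have := r_le m; nra.
have wT_gt0 l : 0 < (w l).[T].
  have [m m_min] := argmin T; apply: lt_le_trans (m_min l).
  have := min_gt0 T m rT m_min; have := rowsum_le_T m; nra.
have [y y_in [w_ge0 [l /eqP wl0]]] := nonneg_at_last_root rT wj_lt0 wT_gt0.
have ry : r <= y by rewrite (itvP y_in).
have [m m_min] := argmin y; have := min_gt0 y m ry m_min.
have -> : (w m).[y] = 0 by apply/le_anti; rewrite w_ge0 -wl0 m_min.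
by rewrite mulr0 ltxx.
Qed.

End NonnegativeMatrix.

Section CTLN.
Variables (R : rcfType) (n : nat) (e : rel 'I_n) (s : {set 'I_n}) (eps delta : R).

Local Notation A := (ImW (ctln e eps delta) s).
Local Notation K := (#|s|%:R : R).

Lemma ImW_ctlnE i j : A i j =
  if i == j then 1 else if e (enum_val j) (enum_val i) then 1 - eps else 1 + delta.
Proof.
rewrite /ImW /subm !mxE (inj_eq enum_val_inj).
by case: (i == j) => //=; rewrite ?subr0 //; case: (e _ _); ring.
Qed.

Lemma trace_ImW_ctln : \tr A = K.
Proof.
rewrite /mxtrace (eq_bigr (fun=> 1)) ?sumr_const ?card_ord // => i _.
by rewrite ImW_ctlnE eqxx.
Qed.

Lemma legal_eps_lt1 : legal eps delta -> eps < 1.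
Proof.
move=> [delta_gt0 [eps_gt0]]; rewrite ltr_pdivlMr ?ltr_wpDr // => lt_delta.
by rewrite ltNge; apply/negP => eps_ge1; move: lt_delta; nra.
Qed.

Lemma not_clique_pair : ~ clique e s -> exists i j : 'I_#|s|,
  i != j /\ ~~ (e (enum_val i) (enum_val j) && e (enum_val j) (enum_val i)).
Proof.
move=> not_clique.
case: (boolP [exists i : 'I_#|s|, exists j : 'I_#|s|, (i != j) &&
    ~~ (e (enum_val i) (enum_val j) && e (enum_val j) (enum_val i))]).
  by move=> /existsP[i /existsP[j /andP[ij nonedge]]]; exists i, j.
move=> /existsPn all_pairs; exfalso; apply: not_clique => x y xs ys xy.
have rank_xy : enum_rank_in xs x != enum_rank_in xs y.
  by apply: contraNneq xy => /(congr1 enum_val); rewrite !enum_rankK_in // => ->.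
move/existsPn/(_ (enum_rank_in xs y)): (all_pairs (enum_rank_in xs x)).
by rewrite rank_xy negbK !enum_rankK_in // => /andP.
Qed.

Lemma ctln_not_clique_unstable : ~ clique e s -> legal eps delta ->
  eps / (1 - eps) * (K ^+ 2 - K - 1) < delta -> ~ positive_stable A.
Proof.
move=> not_clique leg; have eps_lt1 := legal_eps_lt1 leg.
case: leg => [delta_gt0 [eps_gt0 _]].
rewrite mulrAC ltr_pdivrMr ?subr_gt0 // => delta_big A_stable.
have [i0 [j0 [ij0 nonedge]]] := not_clique_pair not_clique.
have k_gt1 : (1 < #|s|)%N.
  by rewrite -[X in (_ < X)%N]card_ord; apply/card_gt1P; exists i0, j0.
have := positive_stable_trace_sqr_lt A_stable k_gt1.
rewrite -subr_gt0 trace_sqr_unit_diag => [|i]; last by rewrite ImW_ctlnE eqxx.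
pose F i j := 2 * eps * (i != j)%:R - (1 - A i j * A j i).
have F_ge0 i j : 0 <= F i j.
  rewrite /F !ImW_ctlnE eq_sym; case: eqVneq => _ /=.
    by rewrite mulr0 mul1r subrr subr0.
  by case: (e _ _); case: (e _ _); nra.
have F_nonedge : eps + delta * (1 - eps) <= F i0 j0.
  rewrite /F !ImW_ctlnE ij0 (negbTE ij0) eq_sym (negbTE ij0) /=.
  by move: nonedge; case: (e _ _); case: (e _ _) => //= _; nra.
have sumF : F i0 j0 + F j0 i0 <= \sum_i \sum_j F i j.
  rewrite pair_bigA.
  apply: (ler_sum_pair (F := fun p => F p.1 p.2) (i := (i0, j0)) (j := (j0, i0))).
    by rewrite xpair_eqE negb_and ij0.
  by move=> [i j]; apply: F_ge0.
have -> : \sum_i \sum_j (1 - A i j * A j i) =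
    2 * eps * (K * (K - 1)) - \sum_i \sum_j F i j.
  rewrite -sumr_neq_ord mulr_sumr -sumrB; apply: eq_bigr => i _.
  by rewrite mulr_sumr -sumrB; apply: eq_bigr => j _; rewrite /F; ring.
have F_sym : F j0 i0 = F i0 j0 by rewrite /F eq_sym [A j0 i0 * _]mulrC.
lra.
Qed.

Lemma card_in_edges_le_max_indeg x : x \in s ->
  (#|[pred j : 'I_#|s| | e (enum_val j) x]| <= max_indeg e s)%N.
Proof.
move=> xs; apply: (@leq_trans (indeg e s x)); last exact: leq_bigmax_cond.
rewrite /indeg -(card_imset _ enum_val_inj); apply: subset_leq_card.
by apply/subsetP => _ /imsetP[j ej ->]; rewrite inE enum_valP.
Qed.

Lemma ImW_ctln_rowsum_ge (He : irreflexive e) i : 0 <= eps + delta ->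
  K * (1 + delta) - delta - (eps + delta) * (max_indeg e s)%:R <= \sum_j A i j.
Proof.
move=> eps_delta_ge0.
have entryE j : A i j = 1 + delta - delta * (j == i)%:R
    - (eps + delta) * (e (enum_val j) (enum_val i))%:R.
  rewrite ImW_ctlnE eq_sym; case: eqVneq => [->|_]; first by rewrite He /=; ring.
  by case: (e _ _) => /=; ring.
rewrite (eq_bigr _ (fun j _ => entryE j)) !sumrB -!mulr_sumr !sumr_indicator.
rewrite sumr_const card_ord (eq_card1 (x := i)) // -[(1 + delta) *+ _]mulr_natl.
rewrite mulr1 lerB //; apply: ler_wpM2l => //.
by rewrite ler_nat card_in_edges_le_max_indeg ?enum_valP.
Qed.

Lemma ctln_low_indeg_unstable (He : irreflexive e) :
  (max_indeg e s < #|s| - 1)%N -> legal eps delta ->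
  eps * (max_indeg e s)%:R / (#|s| - 1 - max_indeg e s)%:R < delta ->
  ~ positive_stable A.
Proof.
set d := max_indeg e s => d_lt leg; have eps_lt1 := legal_eps_lt1 leg.
case: leg => [delta_gt0 [eps_gt0 _]].
rewrite ltr_pdivrMr ?ltr0n ?subn_gt0 // => delta_big A_stable.
have k_gt0 : (0 < #|s|)%N by lia.
have A_ge0 i j : 0 <= A i j.
  by rewrite ImW_ctlnE; case: eqVneq => _ //; case: (e _ _); lra.
have eps_delta_ge0 : 0 <= eps + delta by lra.
apply: (nonneg_mx_char_poly_root_ge A_ge0 k_gt0
  (fun i => ImW_ctln_rowsum_ge He i eps_delta_ge0)).
have K_split : K = (#|s| - 1 - d)%:R + d%:R + 1.
  by rewrite -natrD natr1; congr (1 *+ _); lia.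
move=> x; rewrite in_itv /= andbT -/d K_split => x_ge.
apply/negP => /(positive_stable_real_root_le_trace A_stable).
rewrite trace_ImW_ctln K_split; lra.
Qed.

End CTLN.

Theorem theorem2 (R : rcfType) (n : nat) (e : rel 'I_n) (He : simple_digraph e)
  (s : {set 'I_n}) :
  (~ clique e s ->
    forall (eps delta theta : R),
      legal eps delta -> 0 < theta -> ctln_nondeg (ctln e eps delta) theta ->
      delta > eps / (1 - eps) * (#|s|%:R ^+ 2 - #|s|%:R - 1) ->
      ~ stable_motif (ctln e eps delta) s theta) /\
  (forall d : nat, max_indeg e s = d -> (d < #|s| - 1)%N ->
    forall (eps delta theta : R),
      legal eps delta -> 0 < theta -> ctln_nondeg (ctln e eps delta) theta ->
      delta > eps * d%:R / (#|s| - 1 - d)%:R ->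
      ~ stable_motif (ctln e eps delta) s theta).
Proof.
split=> [not_clique | d <- d_lt] eps delta theta leg _ _ delta_big [_ A_stable].
- exact: ctln_not_clique_unstable not_clique leg delta_big A_stable.
- exact: ctln_low_indeg_unstable He d_lt leg delta_big A_stable.
Qed.
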